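(* Let $w:\{0,1\}^L\to\mathbb{R}_{\ge 0}$ be a generic fitness landscape inducing the standard staircase triangulation, and let $g,g'$ be genotypes with $g'\subset g$. For every pair of genotypes $\{h,h'\}$ with $X_{h,h'}=X_{g,g'}$ we have $w_g+w_{g'}\ge w_h+w_{h'}$, with equality only if $\{h,h'\}=\{g,g'\}$.
   Context: Genotypes $g\in\{0,1\}^L$ are identified with subsets $\{i:g_i=1\}$ of $\{1,\dots,L\}$ and with vertices of $[0,1]^L$. For genotypes $g,g'$, $X_{g,g'}\in[0,1]^L$ is defined by $X_{g,g'}(i)=\tfrac12(g_i+g'_i)$. The triangulation induced by $w$ is the regular subdivision of $[0,1]^L$ obtained by projecting the upper faces of $\mathrm{conv}\{(g,w_g)\}\subset\mathbb{R}^{L+1}$; $w$ is generic if all $w_g$ are distinct and this subdivision is a triangulation. The standard staircase triangulation consists of the $L!$ simplices $\{g_0\subset g_1\subset\cdots\subset g_L\}$ with $g_0=\emptyset$, $g_L=\{1,\dots,L\}$, $|g_k|=k$. *)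

From mathcomp Require Import all_boot all_order all_algebra all_fingroup.
Set Implicit Arguments. Unset Strict Implicit. Unset Printing Implicit Defensive.
Import Order.TTheory GRing.Theory Num.Theory.
Local Open Scope ring_scope.

(* Genotypes on L loci are subsets of 'I_L (the set of loci i with g_i = 1),
   i.e. vertices of the cube [0,1]^L.  A fitness landscape is w : {set 'I_L} -> R. *)

Section Defs.
Variables (R : realFieldType) (L : nat).

Definition coord (g : {set 'I_L}) (i : 'I_L) : R := (i \in g)%:R.

Definition Xmid (g g' : {set 'I_L}) : {ffun 'I_L -> R} :=
  [ffun i => (coord g i + coord g' i) / 2%:R].

Definition affval (a : 'I_L -> R) (b : R) (g : {set 'I_L}) : R :=
  \sum_(i < L) a i * coord g i + b.

(* S is the vertex set of a (projected) upper face of conv{(g, w_g)}: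
   there is a non-vertical supporting hyperplane (graph of an affine function)
   lying weakly above all lifted points and touching exactly those in S. *)
Definition upper_face (w : {set 'I_L} -> R) (S : {set {set 'I_L}}) : Prop :=
  exists (a : 'I_L -> R) (b : R),
    (forall g, w g <= affval a b g) /\ (forall g, g \in S <-> affval a b g = w g).

(* S affinely spans R^L: the only affine function vanishing on S is zero. *)
Definition full_dim (S : {set {set 'I_L}}) : Prop :=
  forall (a : 'I_L -> R) (b : R),
    (forall g, g \in S -> affval a b g = 0) -> (forall i, a i = 0) /\ b = 0.

Definition max_cell (w : {set 'I_L} -> R) (S : {set {set 'I_L}}) : Prop :=
  upper_face w S /\ full_dim S.

(* w is generic: all w_g distinct and the induced subdivision is a
   triangulation (every maximal cell is a simplex, i.e. has L+1 vertices). *)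
Definition generic (w : {set 'I_L} -> R) : Prop :=
  injective w /\ (forall S, max_cell w S -> #|S| = L.+1).

(* simplices of the standard staircase triangulation:
   {g_0 ⊂ g_1 ⊂ ... ⊂ g_L}, g_k = {s 0, ..., s (k-1)} for a permutation s *)
Definition staircase_simplex (S : {set {set 'I_L}}) : Prop :=
  exists s : 'S_L, S = [set [set s j | j : 'I_L & (j < k)%N] | k : 'I_L.+1].

Definition induces_staircase (w : {set 'I_L} -> R) : Prop :=
  forall S, max_cell w S <-> staircase_simplex S.

End Defs.

From mathcomp Require Import all_boot all_order all_algebra all_fingroup.
From mathcomp Require Import lra.
Set Implicit Arguments. Unset Strict Implicit. Unset Printing Implicit Defensive.
Import Order.TTheory GRing.Theory Num.Theory.
Local Open Scope ring_scope.

(* Choose a staircase simplex through both g' and g: order the loci as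
   g', then g \ g', then the complement of g.  Its maximal cell is an upper
   face, i.e. an affine function f >= w with f = w exactly on the simplex.
   Since f is affine and X_{h,h'} = X_{g,g'}, f(h) + f(h') = f(g) + f(g'), so
   w(h) + w(h') <= f(h) + f(h') = w(g) + w(g').  Equality forces h and h' onto
   the simplex, whose vertices form a chain, and two nested pairs with the
   same coordinate sums coincide. *)

Definition staircase (L : nat) (s : 'S_L) : {set {set 'I_L}} :=
  [set [set s j | j : 'I_L & (j < k)%N] | k : 'I_L.+1].

Lemma staircase_chain (L : nat) (s : 'S_L) (A B : {set 'I_L}) :
  A \in staircase s -> B \in staircase s -> A \subset B \/ B \subset A.
Proof.
move=> /imsetP[k1 _ ->] /imsetP[k2 _ ->].
have [le12 | /ltnW le21] := leqP k1 k2; [left | right]; apply: imsetS;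
  by apply/subsetP => j; rewrite !inE => /leq_trans; apply.
Qed.

Lemma staircase_take (L : nat) (t : seq 'I_L) :
  perm_eq t (enum 'I_L) ->
  exists s : 'S_L, forall k, (k <= L)%N -> [set x in take k t] \in staircase s.
Proof.
case/(tuple_permP (t := ord_tuple L))=> s t_def; exists s => k le_kL.
apply/imsetP; exists (inord k) => //; apply/setP => x.
rewrite inE t_def /= -map_take inordK ?ltnS //.
apply/mapP/imsetP => -[j].
- by rewrite in_take ?mem_enum // index_enum_ord tnth_ord_tuple => lt_jk ->;
    exists j; rewrite // inE.
- by rewrite inE => lt_jk ->; exists j;
    rewrite ?tnth_ord_tuple // in_take ?mem_enum // index_enum_ord.
Qed.

Lemma subset_pair_in_staircase (L : nat) (A B : {set 'I_L}) :
  A \subset B -> exists s : 'S_L, A \in staircase s /\ B \in staircase s.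
Proof.
move=> sAB; pose t := enum A ++ enum (B :\: A) ++ enum (~: B).
have t_perm : perm_eq t (enum 'I_L).
  apply: uniq_perm; rewrite ?enum_uniq //.
    rewrite /t !cat_uniq !enum_uniq /= andbT.
    apply/andP; split; apply/hasPn=> x; rewrite ?mem_cat !mem_enum !inE;
    by case: (x \in A) (x \in B) (subsetP sAB x) => [] [] // /(_ isT).
  move=> x; rewrite /t mem_enum !mem_cat !mem_enum !inE.
  by case: (x \in A) (x \in B) => [] [].
have size_t : size t = L by rewrite (perm_size t_perm) size_enum_ord.
have [s prefix_s] := staircase_take t_perm.
exists s; split.
- have -> : A = [set x in take (size (enum A)) t].
    by rewrite take_size_cat ?set_enum.
  by apply: prefix_s; rewrite -[X in (_ <= X)%N]size_t size_cat leq_addr.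
- have -> : B = [set x in take (size (enum A ++ enum (B :\: A))) t].
    apply/setP => x; rewrite /t catA take_size_cat // inE mem_cat !mem_enum !inE.
    by case: (x \in A) (x \in B) (subsetP sAB x) => [] [] // /(_ isT).
  apply: prefix_s; rewrite -[X in (_ <= X)%N]size_t /t catA.
  by rewrite [X in (_ <= X)%N]size_cat leq_addr.
Qed.

Lemma Xmid_eq_count (R : realFieldType) (L : nat) (h h' g g' : {set 'I_L}) :
  Xmid R h h' = Xmid R g g' ->
  forall i, ((i \in h) + (i \in h') = (i \in g) + (i \in g'))%N.
Proof.
move=> E i; have /eqP := congr1 (fun f : {ffun 'I_L -> R} => f i) E.
rewrite /= !ffunE /coord -!natrD (inj_eq (mulIf _)) ?invr_eq0 ?pnatr_eq0 //.
by rewrite eqr_nat => /eqP.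
Qed.

Lemma affval_Xmid (R : realFieldType) (L : nat) (a : 'I_L -> R) (b : R)
    (h h' g g' : {set 'I_L}) :
  Xmid R h h' = Xmid R g g' ->
  affval a b h + affval a b h' = affval a b g + affval a b g'.
Proof.
move=> E; rewrite /affval addrACA [RHS]addrACA -!big_split /=; congr (_ + _).
by apply: eq_bigr => i _; rewrite -!mulrDr /coord -!natrD (Xmid_eq_count E).
Qed.

Lemma upper_face_Xmid (R : realFieldType) (L : nat) (w : {set 'I_L} -> R)
    (S : {set {set 'I_L}}) (g g' h h' : {set 'I_L}) :
  upper_face w S -> g \in S -> g' \in S -> Xmid R h h' = Xmid R g g' ->
  w h + w h' <= w g + w g' /\ (w g + w g' = w h + w h' -> h \in S /\ h' \in S).
Proof.
move=> [a [b [w_le S_eq]]] /S_eq wg /S_eq wg' /(affval_Xmid a b).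
rewrite wg wg' => f_sum; have := w_le h; have := w_le h'.
split=> [|w_eq]; first by lra.
by split; apply/S_eq; lra.
Qed.

Lemma nested_pairs_eq (T : finType) (A B C D : {set T}) :
  A \subset B -> C \subset D ->
  (forall x, ((x \in A) + (x \in B) = (x \in C) + (x \in D))%N) ->
  A = C /\ B = D.
Proof.
move=> /subsetP sAB /subsetP sCD E.
have memE x : (x \in A) = (x \in C) /\ (x \in B) = (x \in D).
  move: (introT implyP (sAB x)) (introT implyP (sCD x)) (E x).
  by case: (x \in A) (x \in B) (x \in C) (x \in D) => [] [] [] [].
by split; apply/setP => x; case: (memE x).
Qed.

Theorem mainTheorem9 (R : realFieldType) (L : nat) (w : {set 'I_L} -> R)
    (w_ge0 : forall g, 0 <= w g)
    (w_gen : generic w) (w_stair : induces_staircase w)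
    (g g' : {set 'I_L}) (sub_g'g : g' \subset g) :
  forall h h' : {set 'I_L}, Xmid R h h' = Xmid R g g' ->
    w h + w h' <= w g + w g' /\
    (w g + w g' = w h + w h' -> (h = g /\ h' = g') \/ (h = g' /\ h' = g)).
Proof.
move=> h h' E.
have [s [g'S gS]] := subset_pair_in_staircase sub_g'g.
have [face_s _] : max_cell w (staircase s) by apply/w_stair; exists s.
have [le_w eq_w] := upper_face_Xmid face_s gS g'S E.
split=> // /eq_w[hS h'S].
case: (staircase_chain hS h'S) => [sub_hh' | sub_h'h].
- right; apply: nested_pairs_eq sub_hh' sub_g'g _ => x.
  by rewrite (Xmid_eq_count E) addnC.
- left; apply/and_comm/(nested_pairs_eq sub_h'h sub_g'g) => x.
  by rewrite addnC (Xmid_eq_count E) addnC.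
Qed.
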